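(* For every word $\omega\in[n]^*$, the set $B^M_\omega:=M_\omega B_\omega\subseteq\mathbb{Z}^n$ is a monotone lattice path from $0$ to $u_\omega$: its elements can be listed as $x_0,x_1,\dots,x_m$ with $x_0=0$, $x_m=u_\omega$, and $x_t-x_{t-1}\in\{e_1,\dots,e_n\}$ for all $t=1,\dots,m$.
   Context: Let $[n]=\{1,\dots,n\}$, $e_1,\dots,e_n$ the standard basis of $\mathbb{Z}^n$; $\varepsilon$ is the empty word, $*$ concatenation. For words $\omega$ over $[n]$ define recursively $a^i_\omega,\delta^i_\omega\in\mathbb{Z}^n$: $a^i_\varepsilon=\delta^i_\varepsilon=e_i$; $a^i_{\omega*j}=a^i_\omega$ if $i\ne j$, $a^j_{\omega*j}=a^j_\omega+\delta^j_\omega$; $\delta^j_{\omega*j}=\delta^j_\omega$, $\delta^i_{\omega*j}=\delta^i_\omega-\delta^j_\omega$ for $i\ne j$. Let $B_\varepsilon=\{0\}$, $B_{\omega*j}=B_\omega+\{0,\delta^j_\omega\}$ (Minkowski sum). Let $M_\omega=(\delta^1_\omega\ \cdots\ \delta^n_\omega)^{-1}$ (inverse of the matrix with columns $\delta^i_\omega$). For $k\in[n]$ let $D^k=\mathrm{id}+e_k(\mathbb{1}-e_k)^T$ with $\mathbb{1}=(1,\dots,1)^T$. Define $u_\varepsilon=0$, $u_{\omega*j}=e_j+D^j u_\omega$. *)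

From HB Require Import structures.
From mathcomp Require Import all_boot all_order all_algebra.
Set Implicit Arguments. Unset Strict Implicit. Unset Printing Implicit Defensive.
Import Order.TTheory GRing.Theory Num.Theory.
Local Open Scope ring_scope.

(* Vectors of Z^n are column vectors 'cV[int]_n; coordinates indexed by 'I_n
   (so [n] = {1..n} is rendered as 'I_n = {0..n-1}).  Words over [n] are
   seq 'I_n, with omega * j = rcons omega j. *)

Definition ev {n} (i : 'I_n) : 'cV[int]_n := delta_mx i 0.

Definition delta_step {n} (D : 'M[int]_n) (j : 'I_n) : 'M[int]_n :=
  \matrix_(r < n, i < n) (if i == j then D r j else D r i - D r j).

(* deltaM w = (delta^1_w ... delta^n_w), column i is delta^i_w *)
Definition deltaM {n} (w : seq 'I_n) : 'M[int]_n := foldl delta_step 1%:M w.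

Definition delta {n} (w : seq 'I_n) (i : 'I_n) : 'cV[int]_n := col i (deltaM w).

Definition Mw {n} (w : seq 'I_n) : 'M[int]_n := invmx (deltaM w).

(* B on a reversed word: B_eps = {0}, B_{w*j} = B_w + {0, delta^j_w} *)
Fixpoint Brev {n} (r : seq 'I_n) : seq 'cV[int]_n :=
  match r with
  | [::] => [:: 0]
  | j :: r' => Brev r' ++ [seq x + delta (rev r') j | x <- Brev r']
  end.

Definition Bw {n} (w : seq 'I_n) : seq 'cV[int]_n := Brev (rev w).

Definition BMw {n} (w : seq 'I_n) : seq 'cV[int]_n := [seq Mw w *m x | x <- Bw w].

Definition Dk {n} (k : 'I_n) : 'M[int]_n :=
  1%:M + \matrix_(r < n, c < n) ((r == k) && (c != k))%:R.

Definition uw {n} (w : seq 'I_n) : 'cV[int]_n :=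
  foldl (fun u j => ev j + Dk j *m u) 0 w.

Definition unit_step {n} : rel 'cV[int]_n := fun x y => [exists i : 'I_n, y - x == ev i].

From HB Require Import structures.
From mathcomp Require Import all_boot all_order all_algebra.
Import Order.TTheory GRing.Theory Num.Theory.
Local Open Scope ring_scope.

(* D^j = 1 + N_j with N_j^2 = 0, so D^j is
      invertible with inverse E_j = 1 - N_j, and the delta recursion is
      right multiplication by E_j.  Hence M_{w*j} = D^j M_w and
      M_w delta^j_w = e_j, which gives
         B^M_{w*j} = D^j B^M_w  u  (D^j B^M_w + e_j).
   2. Lifting a lattice path.  Let A be an integer matrix with A e_j = e_j
      and A e_i = e_i + e_j for i <> j (D^j is one such matrix).  A monotone
      path x_0, ..., x_m lifts to the monotone path
         A x_0, A x_0 + e_j, A x_1, A x_1 + e_j, ..., A x_m + e_j,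
      where A x_t is dropped whenever x_t - x_{t-1} = e_j (then A x_t equals
      A x_{t-1} + e_j).  Its points are exactly A x_t and A x_t + e_j, and
      it ends at A x_m + e_j.
   3. The theorem follows: the lifted path of B^M_w lists B^M_{w*j}, and
      D^j u_w + e_j = u_{w*j}. *)

Section WordAlgebra.
Variable n : nat.
Implicit Types (j : 'I_n) (w : seq 'I_n).

Definition Nk j : 'M[int]_n := \matrix_(r < n, c < n) ((r == j) && (c != j))%:R.

Definition Ek j : 'M[int]_n := 1%:M - Nk j.

Lemma Nk_nilpotent j : Nk j *m Nk j = 0.
Proof.
apply/matrixP => r i; rewrite !mxE big1 // => k _; rewrite !mxE.
by case: (k == j); rewrite ?andbF ?andbT ?mul0r ?mulr0.
Qed.

Lemma Ek_Dk j : Ek j *m Dk j = 1%:M.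
Proof.
rewrite /Ek /Dk -/(Nk j) mulmxBl !mulmxDr !mul1mx mulmx1 Nk_nilpotent.
by rewrite addr0 addrK.
Qed.

Lemma delta_stepE (D : 'M[int]_n) j : delta_step D j = D *m Ek j.
Proof.
apply/matrixP => r i; rewrite /Ek mulmxBr mulmx1 !mxE.
rewrite (bigD1 j) //= big1 => [|k kj]; last by rewrite !mxE (negbTE kj) mulr0.
rewrite !mxE eqxx /= addr0.
by case: eqP => [->|ij] /=; rewrite ?mulr0 ?subr0 ?mulr1.
Qed.

Lemma deltaM_rcons w j : deltaM (rcons w j) = deltaM w *m Ek j.
Proof. by rewrite /deltaM foldl_rcons delta_stepE. Qed.

Lemma deltaM_unit w : deltaM w \in unitmx.
Proof.
elim/last_ind: w => [|w j IH]; first by rewrite /deltaM /= unitmx1.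
by rewrite deltaM_rcons unitmx_mul IH; case: (mulmx1_unit (Ek_Dk j)).
Qed.

Lemma Mw_rcons w j : Mw (rcons w j) = Dk j *m Mw w.
Proof.
have inv : (Dk j *m Mw w) *m deltaM (rcons w j) = 1%:M.
  rewrite deltaM_rcons /Mw mulmxA -(mulmxA (Dk j)) mulVmx ?deltaM_unit //.
  by rewrite mulmx1 (mulmx1C (Ek_Dk j)).
by rewrite /Mw -[LHS]mul1mx -inv mulmxK ?deltaM_unit.
Qed.

Lemma Mw_delta w j : Mw w *m delta w j = ev j.
Proof. by rewrite /delta colE /Mw mulKmx ?deltaM_unit. Qed.

Lemma Dk_ev_same j : Dk j *m ev j = ev j.
Proof.
rewrite /Dk mulmxDl mul1mx; apply/matrixP => r c.
rewrite !mxE big1 ?addr0 // => k _; rewrite !mxE.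
by case: (k == j); rewrite ?andbF ?mul0r ?mulr0.
Qed.

Lemma Dk_ev_other j i : i != j -> Dk j *m ev i = ev i + ev j.
Proof.
move=> ij; rewrite /Dk mulmxDl mul1mx; congr (_ + _); apply/matrixP => r c.
rewrite !mxE (bigD1 i) //= big1 => [|k ki]; last by rewrite !mxE (negbTE ki) mulr0.
by rewrite !mxE !eqxx ij addr0 (ord1 c) eqxx /= andbT mulr1.
Qed.

Lemma BMw_rcons w j :
  BMw (rcons w j) =
  [seq Dk j *m x | x <- BMw w] ++ [seq Dk j *m x + ev j | x <- BMw w].
Proof.
rewrite /BMw /Bw rev_rcons /= -/(Bw w) map_cat -!map_comp revK.
congr (_ ++ _); apply: eq_map => x /=; rewrite Mw_rcons -mulmxA //.
by rewrite !mulmxDr Mw_delta Dk_ev_same.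
Qed.

Lemma uw_rcons w j : uw (rcons w j) = Dk j *m uw w + ev j.
Proof. by rewrite /uw foldl_rcons addrC. Qed.

End WordAlgebra.
Arguments Dk_ev_same {n}.
Arguments Dk_ev_other {n}.

Section LiftPath.
Variables (n : nat) (A : 'M[int]_n) (j : 'I_n).
Hypothesis A_ev_j : A *m ev j = ev j.
Hypothesis A_ev_other : forall i, i != j -> A *m ev i = ev i + ev j.

(* The lifted path starting at A prev, without its first point. *)
Fixpoint lift (prev : 'cV[int]_n) (s : seq 'cV[int]_n) : seq 'cV[int]_n :=
  A *m prev + ev j ::
  if s is x :: s' then
    (if x - prev == ev j then [::] else [:: A *m x]) ++ lift x s'
  else [::].

Lemma lift_ev_j_step {prev x : 'cV[int]_n} :
  x - prev = ev j -> A *m x = A *m prev + ev j.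
Proof. by move=> step; rewrite -[x](subrK prev) mulmxDr step A_ev_j addrC. Qed.

Lemma mem_lift (prev : 'cV[int]_n) (s : seq 'cV[int]_n) :
  A *m prev :: lift prev s =i
  [seq A *m x | x <- prev :: s] ++ [seq A *m x + ev j | x <- prev :: s].
Proof.
elim: s prev => [|x s IH] prev y; first by rewrite /= !inE.
move: (IH x y); rewrite /= -/(lift x s) !inE !mem_cat /= !inE => IHy.
(* Both sides list A prev, A prev + e_j and the points for x :: s; when the
   step to x is e_j, the point A prev + e_j is A x and is listed only once. *)
case: ifP => [/eqP/lift_ev_j_step Ax|_].
  rewrite Ax in IHy *; rewrite in_nil /= IHy.
  by case: (y =P A *m prev + ev j) => [->|_]; rewrite ?eqxx ?orbT.
by rewrite /= inE IHy; case: (y == A *m prev + ev j); rewrite ?orbT.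
Qed.

(* The lifted path ends at A x_m + e_j (it is nonempty, so the default d of
   last is irrelevant). *)
Lemma last_lift (d prev : 'cV[int]_n) (s : seq 'cV[int]_n) :
  last d (lift prev s) = A *m last prev s + ev j.
Proof.
elim: s d prev => [|x s IH] d prev //=.
by case: ifP => _; rewrite /= ?last_cat IH.
Qed.

(* A unit step e_i of the path lifts to unit steps: e_j if i = j, and the
   two steps e_j, e_i (through A prev + e_j) otherwise. *)
Lemma lift_path (prev : 'cV[int]_n) (s : seq 'cV[int]_n) :
  path unit_step prev s -> path unit_step (A *m prev) (lift prev s).
Proof.
have step_j (y : 'cV[int]_n) : unit_step y (y + ev j).
  by apply/existsP; exists j; rewrite addrAC subrr add0r.
elim: s prev => [|x s IH] prev /=; first by rewrite step_j.
case/andP => /existsP[i /eqP step_i] p_xs; rewrite step_j /=.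
case: ifP => [/eqP step_ej|/negbT step_nej].
  by rewrite /= -(lift_ev_j_step step_ej) IH.
have ij : i != j by apply: contraNneq step_nej => <-; rewrite step_i.
rewrite /= IH // andbT; apply/existsP; exists i.
by rewrite opprD addrA -mulmxBr step_i A_ev_other // addrK.
Qed.

End LiftPath.
Arguments lift {n} A j prev s.
Arguments mem_lift {n A j}.
Arguments last_lift {n} A j.
Arguments lift_path {n A j}.

Theorem lemma3p2 (n : nat) (w : seq 'I_n) :
  exists s : seq 'cV[int]_n,
    [/\ forall x, (x \in BMw w) = (x \in 0 :: s),
        last 0 s = uw w
      & path unit_step 0 s].
Proof.
elim/last_ind: w => [|w j [s [mem_s last_s path_s]]].
  by exists [::]; split => // x; rewrite /BMw /Bw /= mulmx0.
have D0 : Dk j *m 0 = 0 :> 'cV[int]_n by rewrite mulmx0.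
exists (lift (Dk j) j 0 s); split.
- move=> y; rewrite BMw_rcons mem_cat (eq_mem_map _ mem_s).
  rewrite (eq_mem_map (fun x => Dk j *m x + ev j) mem_s) -mem_cat.
  by rewrite -(mem_lift (Dk_ev_same j)) D0.
- by rewrite last_lift last_s uw_rcons.
- by rewrite -{1}D0; apply: (lift_path (Dk_ev_same j) (Dk_ev_other j)).
Qed.
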